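(* Let $2\le k\le d$, suppose dimension $k$ is just rotating (after some step $N\le i$), and let $a=\lambda x^{(i)}_{k-1}$ and $b=x^{(i)}_k$. Suppose that $\theta_g\le\pi/2$, $\gamma(i)>\pi/2$ and $|a+b|>|a|$. Then $\langle\lambda[a+b],[\lambda b]\rangle\le\pi/2$, entailing $\gamma(i+1)\le\phi(i+1)\le\pi/2$.
   Context: Fix an integer $R\ge2$ and $\theta_g=\pi/R$. Polar rounding on $\mathbb{C}$: for $z=Ae^{i\theta}$, $[z]=[A]e^{i[\theta]}$, where $[A]$ is a fixed real rounding function of the modulus and $[\theta]$ is the multiple of $\theta_g$ closest to $\theta$ (deterministic tie-breaking). Let $\lambda\in\mathbb{C}$ be algebraic with $|\lambda|=1$ and $M$ the $d\times d$ Jordan block with eigenvalue $\lambda$. The orbit is $x^{(0)}\in\mathbb{C}^d$ with rounded entries and $x^{(i+1)}_j=[\lambda x^{(i)}_j+x^{(i)}_{j+1}]$ for $j<d$, $x^{(i+1)}_d=[\lambda x^{(i)}_d]$. Dimension $k$ is just rotating after position $N$ if $x^{(i+1)}_k=[\lambda x^{(i)}_k]$ for all $i\ge N$. For $a,b\in\mathbb{C}$ (as vectors in $\mathbb{R}^2$), $\langle a,b\rangle\in[0,\pi]$ is the smallest angle between them. Define $\phi(i)=\langle\lambda x^{(i)}_{k-1},x^{(i)}_k\rangle$ and $\gamma(i)=\langle\lambda x^{(i)}_{k-1}+x^{(i)}_k,\lambda x^{(i)}_{k-1}\rangle$. *)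

From Stdlib Require Import Reals ZArith.
From Coquelicot Require Import Coquelicot.
Open Scope R_scope.

Definition theta_g (Rg : nat) : R := PI / INR Rg.

Definition cexpi (t : R) : C := (cos t, sin t).

(* <a,b> : smallest angle in [0,pi] between a and b viewed as vectors of R^2.
   Convention (degenerate case, not covered by the paper): if a or b is 0,
   the angle is pi/2. *)
Definition cangle (a b : C) : R :=
  if Req_EM_T (Cmod a * Cmod b) 0 then PI / 2
  else acos ((fst a * fst b + snd a * snd b) / (Cmod a * Cmod b)).

(* rnd is a polar rounding with modulus rounding rndA and grid angle thg:
   for z = A e^{i theta}, rnd z = [A] e^{i [theta]} where [theta] = m * thg is
   a multiple of thg closest to theta (ties broken in some fixed way). *)
Definition is_polar_rounding (thg : R) (rndA : R -> R) (rnd : C -> C) : Prop :=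
  forall z : C, exists (th : R) (m : Z),
    z = Cmult (RtoC (Cmod z)) (cexpi th) /\
    (forall m' : Z, Rabs (th - IZR m * thg) <= Rabs (th - IZR m' * thg)) /\
    rnd z = Cmult (RtoC (rndA (Cmod z))) (cexpi (IZR m * thg)).

Fixpoint cpow (z : C) (n : nat) : C :=
  match n with O => RtoC 1 | S n => Cmult z (cpow z n) end.

Definition is_algebraic (lam : C) : Prop :=
  exists (n : nat) (c : nat -> Z),
    (exists j, (j <= n)%nat /\ c j <> 0%Z) /\
    sum_n (fun j => Cmult (RtoC (IZR (c j))) (cpow lam j)) n = RtoC 0.

(* x i j = x^{(i)}_j (coordinates indexed 1..d): rounded orbit of the
   d x d Jordan block with eigenvalue lam *)
Definition jordan_orbit (rnd : C -> C) (lam : C) (d : nat) (x : nat -> nat -> C) : Prop :=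
  (forall j, (1 <= j <= d)%nat -> exists z, x O j = rnd z) /\
  (forall i j, (1 <= j)%nat -> (j < d)%nat ->
     x (S i) j = rnd (Cplus (Cmult lam (x i j)) (x i (S j)))) /\
  (forall i, x (S i) d = rnd (Cmult lam (x i d))).

Definition just_rotating (rnd : C -> C) (lam : C) (x : nat -> nat -> C) (k N : nat) : Prop :=
  forall i, (N <= i)%nat -> x (S i) k = rnd (Cmult lam (x i k)).

Definition phi_ang (lam : C) (x : nat -> nat -> C) (k i : nat) : R :=
  cangle (Cmult lam (x i (k - 1)%nat)) (x i k).

Definition gamma_ang (lam : C) (x : nat -> nat -> C) (k i : nat) : R :=
  cangle (Cplus (Cmult lam (x i (k - 1)%nat)) (x i k)) (Cmult lam (x i (k - 1)%nat)).

From Stdlib Require Import Reals ZArith Lra Lia Psatz.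
From Coquelicot Require Import Coquelicot.
Open Scope R_scope.

(* Write b = x^(i)_k = q e^(i beta): it is itself a rounded value, so beta is a grid angle.
   Rotating by -beta, the hypotheses gamma(i) > pi/2 and |a + b| > |a| say that the real part of
   a + b exceeds the modulus of its imaginary part, i.e. the argument of a + b lies within pi/4
   of beta.  Rounding that argument to the nearest grid angle gives beta + J theta_g with
   |J| theta_g < pi/2, hence |J| theta_g <= pi/2 - theta_g/2.  Rounding the argument of lam b
   costs at most theta_g/2 more, so the arguments of lam [a + b] and [lam b] differ by at most
   pi/2 and their dot product is nonnegative.  Finally, when A.B >= 0 the angle between A + B
   and A is at most the angle between A and B (by Cauchy-Schwarz), which gives
   gamma(i+1) <= phi(i+1). *)

Definition cdot (a b : C) : R := fst a * fst b + snd a * snd b.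

Lemma cdot_comm (a b : C) : cdot a b = cdot b a.
Proof. unfold cdot; ring. Qed.

Lemma cdot_add_l (a b c : C) : cdot (a + b) c = cdot a c + cdot b c.
Proof. unfold cdot; simpl; ring. Qed.

Lemma Cmod_mul_self (z : C) : Cmod z * Cmod z = cdot z z.
Proof.
  unfold Cmod, cdot. rewrite sqrt_sqrt; [ring | nra].
Qed.

Lemma cdot_sqr_le (a b : C) : cdot a b * cdot a b <= cdot a a * cdot b b.
Proof.
  unfold cdot. pose proof (pow2_ge_0 (fst a * snd b - snd a * fst b)). nra.
Qed.

Lemma RtoC_mult_cexpi (r t : R) : (r * cexpi t)%C = (r * cos t, r * sin t).
Proof. unfold cexpi, Cmult, RtoC; simpl. f_equal; ring. Qed.

Lemma cexpi_add (s t : R) : cexpi (s + t) = (cexpi s * cexpi t)%C.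
Proof. unfold cexpi, Cmult; simpl. rewrite cos_plus, sin_plus. f_equal; ring. Qed.

Lemma cexpi_0 : cexpi 0 = 1%C.
Proof. unfold cexpi, RtoC. now rewrite cos_0, sin_0. Qed.

Lemma cexpi_2PI_mult (k : Z) : cexpi (IZR k * (2 * PI)) = 1%C.
Proof.
  assert (Hsin : sin (IZR k * PI) = 0) by (apply sin_eq_0_1; now exists k).
  unfold cexpi, RtoC. f_equal.
  - replace (IZR k * (2 * PI)) with (2 * (IZR k * PI)) by ring.
    rewrite cos_2a_sin, Hsin. ring.
  - apply sin_eq_0_1. exists (2 * k)%Z. rewrite mult_IZR. ring.
Qed.

Lemma cexpi_eq (s t : R) : cexpi s = cexpi t -> exists k : Z, s = t + IZR k * (2 * PI).
Proof.
  unfold cexpi. intros Hst. injection Hst as Hc Hs.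
  assert (Hcos : cos (s - t) = 1).
  { rewrite cos_minus, Hc, Hs. pose proof (sin2_cos2 t). unfold Rsqr in *. lra. }
  assert (Hsin : sin ((s - t) / 2) = 0).
  { replace (s - t) with (2 * ((s - t) / 2)) in Hcos by field.
    rewrite cos_2a_sin in Hcos. nra. }
  destruct (sin_eq_0_0 _ Hsin) as [k Hk]. exists k.
  replace s with (t + 2 * ((s - t) / 2)) by field. rewrite Hk. ring.
Qed.

Lemma Cmod_cexpi (t : R) : Cmod (cexpi t) = 1.
Proof.
  unfold Cmod, cexpi; simpl.
  replace (cos t * (cos t * 1) + sin t * (sin t * 1)) with 1; [apply sqrt_1 |].
  pose proof (sin2_cos2 t) as Ht. unfold Rsqr in Ht. lra.
Qed.

Lemma Cmod_polar (r t : R) : 0 <= r -> Cmod (r * cexpi t) = r.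
Proof.
  intros Hr. rewrite Cmod_mult, Cmod_R, Cmod_cexpi, Rabs_pos_eq; [ring | exact Hr].
Qed.

Lemma Cmod_rotate (z : C) (t : R) : Cmod (z * cexpi t) = Cmod z.
Proof. rewrite Cmod_mult, Cmod_cexpi. ring. Qed.

Lemma cdot_rotate (z w : C) (t : R) : cdot (z * cexpi t) (w * cexpi t) = cdot z w.
Proof.
  unfold cdot, cexpi, Cmult; simpl.
  pose proof (sin2_cos2 t) as Ht. unfold Rsqr in Ht.
  transitivity ((fst z * fst w + snd z * snd w) * (sin t * sin t + cos t * cos t)); [ring |].
  rewrite Ht. ring.
Qed.

Lemma cdot_polar (r1 r2 t1 t2 : R) :
  cdot (r1 * cexpi t1) (r2 * cexpi t2) = r1 * r2 * cos (t1 - t2).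
Proof. rewrite !RtoC_mult_cexpi, cos_minus. unfold cdot; simpl. ring. Qed.

Lemma unit_polar (z : C) : Cmod z = 1 -> exists t : R, z = cexpi t.
Proof.
  intros Hz.
  assert (Hcs : cdot z z = 1) by (rewrite <- Cmod_mul_self, Hz; ring).
  unfold cdot in Hcs.
  assert (Hc : -1 <= fst z <= 1) by nra.
  assert (Hsin : sin (acos (fst z)) = Rabs (snd z)).
  { rewrite sin_acos by exact Hc. rewrite <- sqrt_Rsqr_abs. f_equal. unfold Rsqr. lra. }
  destruct z as [c s]; simpl in *.
  destruct (Rle_or_lt 0 s) as [Hs | Hs].
  - exists (acos c). unfold cexpi. rewrite cos_acos, Hsin, Rabs_pos_eq; auto.
  - exists (- acos c). unfold cexpi. rewrite cos_neg, sin_neg, cos_acos, Hsin, Rabs_left; auto.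
    f_equal. ring.
Qed.

Lemma polar_right_cone (z : C) :
  Rabs (snd z) < fst z -> exists t : R, Rabs t < PI / 4 /\ z = (Cmod z * cexpi t)%C.
Proof.
  destruct z as [w v]; simpl. intros Hv.
  destruct (Rabs_def2 _ _ Hv) as [Hv1 Hv2].
  assert (Hw : 0 < w) by lra.
  set (y := v / w).
  assert (Hyw : y * w = v) by (unfold y; field; lra).
  assert (Hy : -1 < y < 1) by (split; nra).
  assert (Hsq : 0 < sqrt (1 + y²)) by (apply sqrt_lt_R0; pose proof (Rle_0_sqr y); lra).
  assert (Hmod : Cmod (w, v) = w * sqrt (1 + y²)).
  { unfold Cmod; simpl.
    replace (w * (w * 1) + v * (v * 1)) with (w² * (1 + y²)) by (unfold y, Rsqr; field; lra).
    rewrite sqrt_mult, sqrt_Rsqr by (lra || apply Rle_0_sqr || (pose proof (Rle_0_sqr y); lra)).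
    reflexivity. }
  exists (atan y). split.
  - apply Rabs_def1; rewrite <- atan_1.
    + apply atan_increasing. lra.
    + rewrite <- atan_opp. apply atan_increasing. lra.
  - rewrite RtoC_mult_cexpi, Hmod, cos_atan, sin_atan, <- Hyw.
    f_equal; field; lra.
Qed.

Lemma Cmod_lt_cdot (a b : C) : Cmod a < Cmod b -> cdot a a < cdot b b.
Proof.
  intros H. rewrite <- !Cmod_mul_self. pose proof (Cmod_ge_0 a). nra.
Qed.

Lemma obtuse_shift_right_cone (u : C) (q : R) :
  0 <= q -> cdot (u + q) u < 0 -> Cmod u < Cmod (u + q) ->
  Rabs (snd (u + q)%C) < fst (u + q)%C.
Proof.
  intros Hq Hdot Hmod. apply Cmod_lt_cdot in Hmod.
  destruct u as [u1 u2]. unfold cdot in *; simpl in *. rewrite Rplus_0_r in *.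
  assert (Hq' : 0 < q * (2 * u1 + q)) by nra.
  assert (Hw : 0 < u1 + q) by nra.
  assert (Hu1 : u1 < 0) by nra.
  assert (Hu2 : u2 * u2 < (u1 + q) * (u1 + q)) by nra.
  apply Rabs_def1; nra.
Qed.

Lemma obtuse_sum_direction (a : C) (q beta : R) :
  0 <= q ->
  cdot (a + q * cexpi beta) a < 0 -> Cmod a < Cmod (a + q * cexpi beta) ->
  exists t : R, Rabs t < PI / 4 /\
    (a + q * cexpi beta = Cmod (a + q * cexpi beta) * cexpi (beta + t))%C.
Proof.
  intros Hq Hdot Hmod.
  set (u := (a * cexpi (- beta))%C).
  assert (Ha : a = (u * cexpi beta)%C).
  { unfold u. rewrite <- Cmult_assoc, <- cexpi_add, Rplus_opp_l, cexpi_0. ring. }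
  assert (Hab : (a + q * cexpi beta = (u + q) * cexpi beta)%C) by (rewrite Ha; ring).
  rewrite Hab in Hdot, Hmod |- *. rewrite Ha in Hdot, Hmod.
  rewrite cdot_rotate in Hdot. rewrite 2!Cmod_rotate in Hmod. rewrite Cmod_rotate.
  destruct (polar_right_cone (u + q)) as [t [Ht Hpolar]].
  { now apply obtuse_shift_right_cone. }
  exists t. split; [exact Ht |].
  rewrite cexpi_add.
  transitivity (Cmod (u + q) * cexpi t * cexpi beta)%C; [now rewrite <- Hpolar | ring].
Qed.

Lemma acos_antitone (x y : R) : x <= y -> acos y <= acos x.
Proof.
  intros Hxy.
  (* Stdlib extends acos by the constants 0 on [1, +oo) and PI on (-oo, -1]. *)
  destruct (Rle_dec 1 y) as [Hy | Hy].
  { unfold acos at 1. destruct (Rle_dec y (-1)); [lra |].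
    destruct (Rle_dec 1 y); [apply acos_bound | lra]. }
  destruct (Rle_dec x (-1)) as [Hx | Hx].
  { unfold acos at 2. destruct (Rle_dec x (-1)); [apply acos_bound | lra]. }
  destruct (Rle_lt_dec (acos y) (acos x)) as [H | H]; [exact H | exfalso].
  pose proof (acos_bound x). pose proof (acos_bound y).
  pose proof (cos_decreasing_1 (acos x) (acos y)) as Hdecr.
  rewrite !cos_acos in Hdecr by lra.
  assert (y < x) by (apply Hdecr; lra). lra.
Qed.

Lemma cangle_degenerate (a b : C) : Cmod a * Cmod b = 0 -> cangle a b = PI / 2.
Proof. intros H. unfold cangle. now destruct Req_EM_T. Qed.

Lemma cangle_acos (a b : C) :
  Cmod a * Cmod b <> 0 -> cangle a b = acos (cdot a b / (Cmod a * Cmod b)).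
Proof. intros H. unfold cangle. now destruct Req_EM_T. Qed.

Lemma cangle_le_PI2 (a b : C) : 0 <= cdot a b -> cangle a b <= PI / 2.
Proof.
  intros Hdot.
  destruct (Req_dec (Cmod a * Cmod b) 0) as [H0 | H0].
  - rewrite cangle_degenerate by exact H0. lra.
  - rewrite cangle_acos, <- acos_0 by exact H0. apply acos_antitone.
    apply Rdiv_le_0_compat; [exact Hdot |].
    pose proof (Cmod_ge_0 a) as Ha. pose proof (Cmod_ge_0 b) as Hb.
    destruct (Rmult_le_pos _ _ Ha Hb); [assumption | congruence].
Qed.

Lemma cdot_lt_0_of_cangle (a b : C) : PI / 2 < cangle a b -> cdot a b < 0.
Proof.
  intros H. apply Rnot_le_lt. intros Hdot. apply cangle_le_PI2 in Hdot. lra.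
Qed.

Lemma cangle_add_le (a b : C) : 0 <= cdot a b -> cangle (a + b) a <= cangle a b.
Proof.
  intros Hc.
  assert (Hsum : cdot (a + b) a = cdot a a + cdot a b)
    by (rewrite cdot_add_l, (cdot_comm b); reflexivity).
  destruct (Req_dec (Cmod a * Cmod b) 0) as [H0 | H0].
  { rewrite (cangle_degenerate a b H0). apply cangle_le_PI2.
    rewrite Hsum, <- Cmod_mul_self. nra. }
  assert (Hab : Cmod (a + b) * Cmod (a + b)
                = Cmod a * Cmod a + 2 * cdot a b + Cmod b * Cmod b).
  { rewrite !Cmod_mul_self, cdot_add_l, (cdot_comm a), (cdot_comm b), !cdot_add_l,
      (cdot_comm b a).
    ring. }
  rewrite <- Cmod_mul_self in Hsum.
  pose proof (cdot_sqr_le a b) as Hcs. rewrite <- !Cmod_mul_self in Hcs.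
  pose proof (Cmod_ge_0 a). pose proof (Cmod_ge_0 b).
  assert (Hpos : 0 < Cmod a /\ 0 < Cmod b) by (split; apply Rnot_le_lt; intro; apply H0; nra).
  assert (Hmab : 0 < Cmod (a + b)) by (pose proof (Cmod_ge_0 (a + b)); nra).
  rewrite (cangle_acos (a + b) a), (cangle_acos a b), Hsum by nra.
  set (ma := Cmod a) in *. set (mb := Cmod b) in *. set (mab := Cmod (a + b)) in *.
  set (c := cdot a b) in *.
  apply acos_antitone.
  (* Squared, the gap is (|a|^2 + 2c) (|a|^2 |b|^2 - c^2) >= 0. *)
  assert (Key : c * mab <= (ma * ma + c) * mb).
  { apply Rsqr_incr_0_var; [unfold Rsqr | nra].
    replace (c * mab * (c * mab)) with (c * c * (mab * mab)) by ring. rewrite Hab.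
    assert (0 <= (ma * ma + 2 * c) * (ma * ma * (mb * mb) - c * c)) by (apply Rmult_le_pos; nra).
    nra. }
  replace (c / (ma * mb)) with (c * mab * / (ma * mb * mab)) by (field; lra).
  replace ((ma * ma + c) / (mab * ma)) with ((ma * ma + c) * mb * / (ma * mb * mab))
    by (field; lra).
  apply Rmult_le_compat_r; [left; apply Rinv_0_lt_compat; nra | exact Key].
Qed.

Definition is_nearest_multiple (th t : R) (j : Z) : Prop :=
  forall m : Z, Rabs (t - IZR j * th) <= Rabs (t - IZR m * th).

Lemma exists_multiple_within_half (th t : R) :
  0 < th -> exists m : Z, Rabs (t - IZR m * th) <= th / 2.
Proof.
  intros Hth. destruct (archimed (t / th + / 2)) as [Hup1 Hup2].
  exists (up (t / th + / 2) - 1)%Z. rewrite minus_IZR.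
  set (u := IZR (up (t / th + / 2))) in *.
  replace (t - (u - 1) * th) with (th / 2 - th * (u - (t / th + / 2))) by (field; lra).
  apply Rabs_le. split; nra.
Qed.

Lemma nearest_multiple_within_half (th t : R) (j : Z) :
  0 < th -> is_nearest_multiple th t j -> Rabs (t - IZR j * th) <= th / 2.
Proof.
  intros Hth Hj. destruct (exists_multiple_within_half th t Hth) as [m Hm].
  exact (Rle_trans _ _ _ (Hj m) Hm).
Qed.

Lemma is_nearest_multiple_shift (th t : R) (j K : Z) :
  is_nearest_multiple th (t + IZR K * th) j -> is_nearest_multiple th t (j - K).
Proof.
  intros Hj m. specialize (Hj (m + K)%Z).
  rewrite minus_IZR. rewrite plus_IZR in Hj.
  replace (t - (IZR j - IZR K) * th) with (t + IZR K * th - IZR j * th) by ring.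
  replace (t - IZR m * th) with (t + IZR K * th - (IZR m + IZR K) * th) by ring.
  exact Hj.
Qed.

Lemma theta_g_pos (Rg : nat) : (1 <= Rg)%nat -> 0 < theta_g Rg.
Proof.
  intros HR. unfold theta_g. apply Rdiv_lt_0_compat; [exact PI_RGT_0 |].
  apply lt_0_INR. lia.
Qed.

Lemma two_PI_mult_theta_g (Rg : nat) (k : Z) :
  (1 <= Rg)%nat -> IZR k * (2 * PI) = IZR (2 * Z.of_nat Rg * k) * theta_g Rg.
Proof.
  intros HR. unfold theta_g. rewrite !mult_IZR, <- INR_IZR_INZ.
  assert (0 < INR Rg) by (apply lt_0_INR; lia). field. lra.
Qed.

Lemma theta_g_mult_lt_PI2 (Rg : nat) (J : Z) :
  (1 <= Rg)%nat -> Rabs (IZR J * theta_g Rg) < PI / 2 ->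
  Rabs (IZR J * theta_g Rg) <= PI / 2 - theta_g Rg / 2.
Proof.
  intros HR HJ.
  pose proof (theta_g_pos Rg HR) as Hth.
  assert (HPI : PI = INR Rg * theta_g Rg)
    by (unfold theta_g; field; apply not_0_INR; lia).
  rewrite HPI in HJ |- *. rewrite Rabs_mult, (Rabs_pos_eq (theta_g Rg)), <- abs_IZR in *
    by lra.
  rewrite INR_IZR_INZ in *.
  assert (Hlt : (2 * Z.abs J < Z.of_nat Rg)%Z) by (apply lt_IZR; rewrite mult_IZR; nra).
  assert (Hle : IZR (2 * Z.abs J + 1) <= IZR (Z.of_nat Rg)) by (apply IZR_le; lia).
  rewrite plus_IZR, mult_IZR in Hle. nra.
Qed.

Section PolarRounding.

Variables (Rg : nat) (rndA : R -> R) (rnd : C -> C).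
Hypothesis Rg_pos : (1 <= Rg)%nat.
Hypothesis rndA_nonneg : forall A : R, 0 <= A -> 0 <= rndA A.
Hypothesis rnd_polar : is_polar_rounding (theta_g Rg) rndA rnd.

Lemma rnd_on_grid (z : C) : exists m : Z, rnd z = (rndA (Cmod z) * cexpi (IZR m * theta_g Rg))%C.
Proof. destruct (rnd_polar z) as (_ & m & _ & _ & H). now exists m. Qed.

Lemma rnd_polar_form (r t : R) :
  0 < r -> exists j : Z, is_nearest_multiple (theta_g Rg) t j /\
    rnd (r * cexpi t) = (rndA r * cexpi (IZR j * theta_g Rg))%C.
Proof.
  intros Hr.
  destruct (rnd_polar (r * cexpi t)%C) as (th & m & Hz & Hm & Hrnd).
  rewrite Cmod_polar in Hz, Hrnd by lra.
  assert (Hth : cexpi th = cexpi t).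
  { rewrite !RtoC_mult_cexpi in Hz. injection Hz as Hc Hs. unfold cexpi.
    f_equal; apply (Rmult_eq_reg_l r); lra. }
  destruct (cexpi_eq _ _ Hth) as [k Hk].
  rewrite (two_PI_mult_theta_g Rg k Rg_pos) in Hk.
  exists (m - 2 * Z.of_nat Rg * k)%Z. split.
  - apply is_nearest_multiple_shift. rewrite <- Hk. exact Hm.
  - rewrite Hrnd, minus_IZR.
    replace (IZR m * theta_g Rg) with
      ((IZR m - IZR (2 * Z.of_nat Rg * k)) * theta_g Rg + IZR k * (2 * PI))
      by (rewrite (two_PI_mult_theta_g Rg k Rg_pos); ring).
    rewrite cexpi_add, cexpi_2PI_mult. ring.
Qed.

Lemma rnd_obtuse_sum_acute (lam a z : C) :
  Cmod lam = 1 ->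
  cdot (a + rnd z) a < 0 -> Cmod a < Cmod (a + rnd z) ->
  0 <= cdot (lam * rnd (a + rnd z)) (rnd (lam * rnd z)).
Proof.
  intros Hlam Hdot Hmod.
  destruct (unit_polar lam Hlam) as [phi ->].
  destruct (rnd_on_grid z) as [m Hz]. rewrite Hz in *.
  set (q := rndA (Cmod z)) in *. set (beta := IZR m * theta_g Rg) in *.
  assert (Hq : 0 < q).
  { destruct (rndA_nonneg (Cmod z) (Cmod_ge_0 z)) as [Hq | Hq0]; [exact Hq | exfalso].
    fold q in Hq0. rewrite <- Hq0 in Hmod.
    replace (a + 0 * cexpi beta)%C with a in Hmod by ring. lra. }
  destruct (obtuse_sum_direction a q beta (Rlt_le _ _ Hq) Hdot Hmod) as [d [Hd ->]].
  set (s := Cmod (a + q * cexpi beta)) in *.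
  assert (Hs : 0 < s) by (pose proof (Cmod_ge_0 a); lra).
  replace (cexpi phi * (q * cexpi beta))%C with (q * cexpi (phi + beta))%C
    by (rewrite cexpi_add; ring).
  destruct (rnd_polar_form s (beta + d) Hs) as [j1 [Hj1 ->]].
  destruct (rnd_polar_form q (phi + beta) Hq) as [j2 [Hj2 ->]].
  replace (cexpi phi * (rndA s * cexpi (IZR j1 * theta_g Rg)))%C
    with (rndA s * cexpi (phi + IZR j1 * theta_g Rg))%C by (rewrite cexpi_add; ring).
  rewrite cdot_polar.
  apply Rmult_le_pos; [apply Rmult_le_pos; apply rndA_nonneg; lra |].
  pose proof (theta_g_pos Rg Rg_pos) as Hth.
  pose proof (Rabs_def2 _ _ Hd) as Hd_bounds.
  assert (HJ : Rabs (IZR (j1 - m) * theta_g Rg) <= PI / 2 - theta_g Rg / 2).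
  { apply theta_g_mult_lt_PI2; [exact Rg_pos |].
    specialize (Hj1 m). fold beta in Hj1.
    replace (beta + d - beta) with d in Hj1 by ring.
    apply Rabs_le_between in Hj1. rewrite minus_IZR. apply Rabs_def1; unfold beta in *; lra. }
  apply nearest_multiple_within_half in Hj2; [| exact Hth].
  apply Rabs_le_between in HJ, Hj2. rewrite minus_IZR in HJ.
  apply cos_ge_0; unfold beta in *; lra.
Qed.

End PolarRounding.

Lemma jordan_orbit_rounded (rnd : C -> C) (lam : C) (d : nat) (x : nat -> nat -> C) (i j : nat) :
  jordan_orbit rnd lam d x -> (1 <= j <= d)%nat -> exists z : C, x i j = rnd z.
Proof.
  intros (Hinit & Hstep & Hlast) Hj.
  destruct i as [| i]; [now apply Hinit |].
  destruct (Nat.lt_ge_cases j d) as [Hjd | Hjd].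
  - eexists. apply Hstep; lia.
  - replace j with d by lia. eexists. apply Hlast.
Qed.

Theorem lemma15 (Rg : nat) (rndA : R -> R) (rnd : C -> C) (lam : C)
  (d k N i : nat) (x : nat -> nat -> C) :
  (2 <= Rg)%nat ->
  (forall A : R, 0 <= A -> 0 <= rndA A) ->
  is_polar_rounding (theta_g Rg) rndA rnd ->
  is_algebraic lam -> Cmod lam = 1 ->
  jordan_orbit rnd lam d x ->
  (2 <= k <= d)%nat ->
  just_rotating rnd lam x k N -> (N <= i)%nat ->
  theta_g Rg <= PI / 2 ->
  gamma_ang lam x k i > PI / 2 ->
  Cmod (Cplus (Cmult lam (x i (k - 1)%nat)) (x i k)) > Cmod (Cmult lam (x i (k - 1)%nat)) ->
  cangle (Cmult lam (rnd (Cplus (Cmult lam (x i (k - 1)%nat)) (x i k))))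
         (rnd (Cmult lam (x i k))) <= PI / 2 /\
  gamma_ang lam x k (S i) <= phi_ang lam x k (S i) /\
  phi_ang lam x k (S i) <= PI / 2.
Proof.
  intros HRg HrndA Hrnd _ Hlam Horbit Hk Hrot HNi _ Hgamma Hmod.
  assert (Hnext_prev : x (S i) (k - 1)%nat = rnd (lam * x i (k - 1)%nat + x i k)%C).
  { destruct Horbit as (_ & Hstep & _).
    replace k with (S (k - 1)) at 3 by lia. apply Hstep; lia. }
  assert (Hnext : x (S i) k = rnd (lam * x i k)%C) by (apply Hrot; lia).
  destruct (jordan_orbit_rounded rnd lam d x i k Horbit) as [z Hz]; [lia |].
  assert (Hacute : 0 <= cdot (lam * x (S i) (k - 1)%nat) (x (S i) k)).
  { rewrite Hnext_prev, Hnext, Hz.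
    unfold gamma_ang in Hgamma. rewrite Hz in Hgamma, Hmod.
    apply (rnd_obtuse_sum_acute Rg rndA rnd); [lia | exact HrndA | exact Hrnd | exact Hlam | |].
    - now apply cdot_lt_0_of_cangle.
    - exact Hmod. }
  unfold gamma_ang, phi_ang. rewrite <- Hnext_prev, <- Hnext.
  repeat split.
  - now apply cangle_le_PI2.
  - now apply cangle_add_le.
  - now apply cangle_le_PI2.
Qed.
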